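(* Let $U\in C^{3}(\mathbb{R}^{d})$ be a Morse function, $\boldsymbol{\ell}$ a $C^{1}$ vector field with $\nabla U\cdot\boldsymbol{\ell}\equiv0$, and $\boldsymbol{\sigma}$ a critical point of $U$ such that $\mathbb{H}=\nabla^{2}U(\boldsymbol{\sigma})$ has eigenvalues $-\lambda_{1},\lambda_{2},\dots,\lambda_{d}$ with $\lambda_{1},\dots,\lambda_{d}>0$ and corresponding orthonormal eigenvectors $\boldsymbol{e}_{1},\dots,\boldsymbol{e}_{d}$. Let $\mathbb{L}=D\boldsymbol{\ell}(\boldsymbol{\sigma})$, let $-\mu$ be the unique negative eigenvalue of $\mathbb{H}-\mathbb{L}^{\dagger}$, and let $\boldsymbol{v}$ be a unit eigenvector of $\mathbb{H}-\mathbb{L}^{\dagger}$ for $-\mu$. Then \[ \boldsymbol{v}\cdot\mathbb{H}^{-1}\boldsymbol{v}\,=\,-\frac{(\boldsymbol{v}\cdot\boldsymbol{e}_{1})^{2}}{\lambda_{1}}+\sum_{k=2}^{d}\frac{(\boldsymbol{v}\cdot\boldsymbol{e}_{k})^{2}}{\lambda_{k}}\,=\,-\frac{1}{\mu}\,<\,0. \]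
   Context: $\mathbb{L}^{\dagger}$ is the transpose of $\mathbb{L}$. Under these hypotheses $\mathbb{H}-\mathbb{L}^{\dagger}$ is similar to $\mathbb{H}+\mathbb{L}$, which is invertible with exactly one negative eigenvalue, so $\mu>0$ is well defined. *)

From HB Require Import structures.
From mathcomp Require Import all_boot all_order all_algebra.
From mathcomp Require Import all_classical all_reals all_analysis.
Set Implicit Arguments. Unset Strict Implicit. Unset Printing Implicit Defensive.
Import Order.TTheory GRing.Theory Num.Theory.
Import numFieldNormedType.Exports.
Local Open Scope ring_scope.

Definition ev {R : realType} {d : nat} (i : 'I_d) : 'rV[R]_d := delta_mx 0 i.

Definition dotv {R : realType} {d : nat} (u v : 'rV[R]_d) : R :=
  \sum_(i < d) u 0 i * v 0 i.

Definition partial {R : realType} {d : nat} (i : 'I_d) (f : 'rV[R]_d -> R)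
  : 'rV[R]_d -> R := fun x => 'D_(ev i) f x.

(* iterated partial derivative: [:: i; j] gives d_i d_j f *)
Definition iter_partial {R : realType} {d : nat} (s : seq 'I_d)
  (f : 'rV[R]_d -> R) : 'rV[R]_d -> R := foldr (fun i g => partial i g) f s.

(* f is of class C^k: all partial derivatives of order < k exist everywhere
   (so the ones of order <= k are defined), and all partial derivatives of
   order <= k are continuous. *)
Definition Ck {R : realType} {d : nat} (k : nat) (f : 'rV[R]_d -> R) : Prop :=
  forall s : seq 'I_d, (size s <= k)%N ->
    continuous (iter_partial s f) /\
    ((size s < k)%N -> forall (i : 'I_d) (x : 'rV[R]_d),
        derivable (iter_partial s f) x (ev i)).

Definition Ck_field {R : realType} {d : nat} (k : nat)
  (l : 'rV[R]_d -> 'rV[R]_d) : Prop :=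
  forall i : 'I_d, Ck k (fun x => l x 0 i).

Definition gradient {R : realType} {d : nat} (f : 'rV[R]_d -> R) (x : 'rV[R]_d)
  : 'rV[R]_d := \row_i partial i f x.

Definition hessian {R : realType} {d : nat} (f : 'rV[R]_d -> R) (x : 'rV[R]_d)
  : 'M[R]_d := \matrix_(i, j) partial i (partial j f) x.

Definition jacobian_mx {R : realType} {d : nat} (l : 'rV[R]_d -> 'rV[R]_d)
  (x : 'rV[R]_d) : 'M[R]_d := \matrix_(i, j) partial j (fun y => l y 0 i) x.

Definition morse {R : realType} {d : nat} (f : 'rV[R]_d -> R) : Prop :=
  forall x, gradient f x = 0 -> hessian f x \in unitmx.

From HB Require Import structures.
From mathcomp Require Import all_boot all_order all_algebra.
From mathcomp Require Import all_classical all_reals all_analysis.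
From mathcomp Require Import ring.
Import Order.TTheory GRing.Theory Num.Theory.
Import numFieldNormedType.Exports.
Set Implicit Arguments. Unset Strict Implicit. Unset Printing Implicit Defensive.
Local Open Scope classical_set_scope.
Local Open Scope ring_scope.

(* Differentiating grad U . l = 0 once gives H l(sigma) = 0 at the critical
   point, hence l(sigma) = 0 since H is invertible.  Dividing the same identity
   at sigma + h e_k by h and letting h -> 0 (a second derivative taken through
   difference quotients, as l is only C^1) shows that H L is skew-symmetric.
   Then so is H^-1 L^T, whose quadratic form therefore vanishes, and pairing
   (H - L^T) v = - mu v with H^-1 v gives |v|^2 = - mu v . H^-1 v.  Expanding
   v . H^-1 v in the orthonormal eigenbasis of H gives the middle expression. *)

Section line_limits.
Variables (R : realType) (d : nat).
Implicit Types (f : 'rV[R]_d -> R) (a v : 'rV[R]_d).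

Lemma continuous_cvg_line f a v :
  continuous f -> f (h *: v + a) @[h --> 0^'] --> f a.
Proof.
move=> f_cont.
have : {for 0, continuous (fun h : R => f (h *: v + a))}.
  apply: continuous_comp (f_cont _).
  by apply: cvgD; [apply: cvgZr_tmp; exact: cvg_id | exact: cvg_cst].
by move=> /continuous_withinNx; rewrite scale0r add0r.
Qed.

Lemma derivable_cvg_line_quotient f a v :
  derivable f a v -> f a = 0 -> h^-1 * f (h *: v + a) @[h --> 0^'] --> 'D_v f a.
Proof.
move=> df fa0.
have -> : (fun h : R => h^-1 * f (h *: v + a)) =
          (fun h => h^-1 *: ((f \o shift a) (h *: v) - f a)).
  by apply/funext => h /=; rewrite fa0 subr0.
exact: df.
Qed.
End line_limits.

Section field_orthogonal_to_gradient.
Variables (R : realType) (d : nat) (U : 'rV[R]_d -> R) (l : 'rV[R]_d -> 'rV[R]_d).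
Hypotheses (U_C3 : Ck 3 U) (l_C1 : Ck_field 1 l).
Hypothesis grad_orth_field : forall x, dotv (gradient U x) (l x) = 0.

Let derivable_partial i x j : derivable (partial i U) x (ev j).
Proof. by have [_ /(_ isT)] := @U_C3 [:: i] isT. Qed.

Let continuous_partial2 i j : continuous (partial j (partial i U)).
Proof. by have [] := @U_C3 [:: j; i] isT. Qed.

Let derivable_field i x j : derivable (fun y => l y 0 i) x (ev j).
Proof. by have [_ /(_ isT)] := @l_C1 i [::] isT. Qed.

Let continuous_partial_field i j : continuous (partial j (fun y => l y 0 i)).
Proof. by have [] := @l_C1 i [:: j] isT. Qed.

Lemma partial_dotv_grad_field x j :
  \sum_i (partial j (partial i U) x * l x 0 i
          + partial i U x * partial j (fun y => l y 0 i) x) = 0.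
Proof.
have dot0 : \sum_i (partial i U * (fun y => l y 0 i)) = (fun _ => 0 : R).
  apply/funext => y; rewrite -(grad_orth_field y) fct_sumE /dotv.
  by apply: eq_bigr => i _; rewrite mxE.
have : partial j (\sum_i (partial i U * (fun y => l y 0 i))) x = 0.
  by rewrite dot0; exact: derive_cst.
rewrite /partial derive_sum => [sum0|i]; last first.
  by apply: derivableM; [exact: derivable_partial | exact: derivable_field].
rewrite -[RHS]sum0; apply: eq_bigr => i _.
rewrite deriveM /=; [|exact: derivable_partial | exact: derivable_field].
by rewrite addrC; congr (_ + _); exact: mulrC.
Qed.

Variable sigma : 'rV[R]_d.
Hypotheses (sigma_critical : gradient U sigma = 0)
           (hessian_unit : hessian U sigma \in unitmx).

Let partial_sigma i : partial i U sigma = 0.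
Proof. by have /matrixP/(_ 0 i) := sigma_critical; rewrite !mxE. Qed.

Lemma field_critical0 : l sigma = 0.
Proof.
have Hl0 : hessian U sigma *m (l sigma)^T = 0.
  apply/matrixP => j k; rewrite !mxE -[RHS](partial_dotv_grad_field sigma j).
  by apply: eq_bigr => i _; rewrite !mxE partial_sigma mul0r addr0 (ord1 k).
apply: trmx_inj; rewrite trmx0.
by rewrite -[_^T]mul1mx -(mulVmx hessian_unit) -mulmxA Hl0 mulmx0.
Qed.

Lemma hessian_mul_jacobian_skew :
  hessian U sigma *m jacobian_mx l sigma
  + (hessian U sigma *m jacobian_mx l sigma)^T = 0.
Proof.
apply/matrixP => j k; rewrite !mxE -big_split /=.
under eq_bigr do rewrite !mxE.
set S := (X in X = _).
set F := fun h : R => \sum_i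
  (partial j (partial i U) (h *: ev k + sigma) * (h^-1 * l (h *: ev k + sigma) 0 i)
   + h^-1 * partial i U (h *: ev k + sigma)
     * partial j (fun y => l y 0 i) (h *: ev k + sigma)).
have F0 : F = fun _ => 0.
  apply/funext => h; rewrite /F -[RHS](mulr0 h^-1).
  rewrite -[in RHS](partial_dotv_grad_field (h *: ev k + sigma) j) mulr_sumr.
  by apply: eq_bigr => i _; rewrite mulrDr mulrCA -mulrA.
have : F @ 0^' --> S.
  apply: (@cvg_big R^o _ _ _ _ add_continuous) => // i _.
  apply: cvgD; apply: cvgM.
  - exact: continuous_cvg_line.
  - by apply: derivable_cvg_line_quotient; rewrite ?field_critical0 ?mxE.
  - exact: derivable_cvg_line_quotient.
  - exact: continuous_cvg_line.
by rewrite F0 => /(cvg_lim (@norm_hausdorff _ R^o)) <-; rewrite lim_cst.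
Qed.
End field_orthogonal_to_gradient.

Lemma invmx_eigenvector (R : fieldType) (d : nat) (A : 'M[R]_d) (c : R)
  (x : 'cV[R]_d) :
  A \in unitmx -> x != 0 -> A *m x = c *: x -> invmx A *m x = c^-1 *: x.
Proof.
move=> A_unit x_neq0 eig.
have x_eq : x = c *: (invmx A *m x).
  by rewrite scalemxAr -eig mulmxA mulVmx // mul1mx.
have c_neq0 : c != 0 by apply: contraNneq x_neq0 => c0; rewrite x_eq c0 scale0r.
by rewrite {2}x_eq scalerA mulVf // scale1r.
Qed.

Lemma invmx_mul_trmx_skew (R : comUnitRingType) (d : nat) (H L : 'M[R]_d) :
  H \in unitmx -> H *m L + (H *m L)^T = 0 ->
  (invmx H *m L^T)^T = - (invmx H *m L^T).
Proof.
move=> H_unit skewHL.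
have HL : H *m L = - (L^T *m H^T).
  by apply/eqP; rewrite -addr_eq0 -trmx_mul skewHL.
rewrite trmx_mul trmxK -{1}[L]mul1mx -(mulVmx H_unit) -(mulmxA _ H) HL.
by rewrite mulmxN mulNmx -!mulmxA -trmx_mul mulVmx // trmx1 mulmx1.
Qed.

Section skew_forms.
Variables (R : numFieldType) (d : nat).

Lemma quad_form_skew (A : 'M[R]_d) (v : 'rV[R]_d) :
  A^T = - A -> v *m A *m v^T = 0.
Proof.
move=> skewA; set q := v *m A *m v^T.
have qT : q^T = - q.
  by rewrite !trmx_mul trmxK skewA mulNmx mulmxN mulmxA.
have q_opp : q 0 0 = - q 0 0.
  by move/matrixP: qT => /(_ 0 0); rewrite !mxE.
have /eqP : q 0 0 *+ 2 = 0 by rewrite mulr2n {1}q_opp addNr.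
rewrite mulrn_eq0 /= => /eqP q0.
by apply/matrixP => i j; rewrite (ord1 i) (ord1 j) q0 mxE.
Qed.

Lemma eigen_quad_form_invmx (H L : 'M[R]_d) (c : R) (v : 'rV[R]_d) :
  H \in unitmx -> H *m L + (H *m L)^T = 0 ->
  (H - L^T) *m v^T = c *: v^T ->
  c *: (v *m invmx H *m v^T) = v *m v^T.
Proof.
move=> H_unit skewHL eig.
have /quad_form_skew skew0 := invmx_mul_trmx_skew H_unit skewHL.
rewrite scalemxAr -eig mulmxA mulmxBr mulmxBl -(mulmxA v) mulVmx // mulmx1.
by rewrite -(mulmxA v) skew0 subr0.
Qed.
End skew_forms.

Lemma dotvE (R : realType) (d : nat) (u w : 'rV[R]_d) : dotv u w = (u *m w^T) 0 0.
Proof. by rewrite /dotv !mxE; apply: eq_bigr => i _; rewrite mxE. Qed.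

Section orthonormal_basis.
Variables (R : realType) (d : nat) (e : 'I_d -> 'rV[R]_d).
Hypothesis e_orthonormal : forall j k, dotv (e j) (e k) = (j == k)%:R.
Let E : 'M[R]_d := \matrix_k e k.

Let basis_mulmx_tr : E *m E^T = 1%:M.
Proof.
apply/matrixP => j k; rewrite !mxE -e_orthonormal /dotv.
by apply: eq_bigr => i _; rewrite /E !mxE.
Qed.

Let tr_mulmx_basis : E^T *m E = 1%:M.
Proof. exact: mulmx1C basis_mulmx_tr. Qed.

Let basis_tr_neq0 k : (e k)^T != 0.
Proof.
apply/eqP => ek0; have := e_orthonormal k k.
by rewrite eqxx dotvE ek0 mulmx0 mxE => /eqP; rewrite eq_sym oner_eq0.
Qed.

Lemma quad_form_eigenbasis (A : 'M[R]_d) (c : 'I_d -> R) (v : 'rV[R]_d) :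
  (forall k, A *m (e k)^T = c k *: (e k)^T) ->
  (v *m A *m v^T) 0 0 = \sum_k c k * dotv v (e k) ^+ 2.
Proof.
move=> eig.
have AE : A *m E^T = E^T *m diag_mx (\row_k c k).
  apply/matrixP => i k; rewrite mul_mx_diag !mxE.
  have := congr1 (fun x : 'cV_d => x i 0) (eig k); rewrite /= !mxE mulrC => <-.
  by apply: eq_bigr => m _; rewrite !mxE.
set w := v *m E^T.
have -> : v *m A *m v^T = w *m diag_mx (\row_k c k) *m w^T.
  rewrite -[v]mulmx1 -tr_mulmx_basis !trmx_mul trmxK !mulmxA -(mulmxA _ A) AE.
  by rewrite -!mulmxA (mulmxA E) basis_mulmx_tr mul1mx.
rewrite mul_mx_diag mxE; apply: eq_bigr => k _.
have wk : \sum_j v 0 j * E^T j k = dotv v (e k).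
  by apply: eq_bigr => j _; rewrite /E !mxE.
by rewrite !mxE wk mulrAC mulrC -expr2.
Qed.

Lemma dotv_invmx_eigenbasis (A : 'M[R]_d) (c : 'I_d -> R) (v : 'rV[R]_d) :
  A \in unitmx -> (forall k, A *m (e k)^T = c k *: (e k)^T) ->
  dotv v ((invmx A *m v^T)^T) = \sum_k (c k)^-1 * dotv v (e k) ^+ 2.
Proof.
move=> A_unit eig; rewrite dotvE trmxK mulmxA.
by apply: quad_form_eigenbasis => k; exact: invmx_eigenvector.
Qed.
End orthonormal_basis.

(* d = n.+1; the index ord0 plays the role of index 1 in the paper. *)
Theorem lemma8p1 (R : realType) (n : nat)
  (U : 'rV[R]_n.+1 -> R) (l : 'rV[R]_n.+1 -> 'rV[R]_n.+1) (sigma : 'rV[R]_n.+1)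
  (lam : 'I_n.+1 -> R) (e : 'I_n.+1 -> 'rV[R]_n.+1)
  (mu : R) (v : 'rV[R]_n.+1) :
  Ck 3 U -> morse U ->
  Ck_field 1 l ->
  (forall x, dotv (gradient U x) (l x) = 0) ->
  gradient U sigma = 0 ->
  (forall k, 0 < lam k) ->
  (forall j k, dotv (e j) (e k) = (j == k)%:R) ->
  (hessian U sigma *m (e ord0)^T = (- lam ord0) *: (e ord0)^T) ->
  (forall k, k != ord0 -> hessian U sigma *m (e k)^T = lam k *: (e k)^T) ->
  let H := hessian U sigma in
  let L := jacobian_mx l sigma in
  0 < mu ->
  (H - L^T) *m v^T = (- mu) *: v^T ->
  (forall nu, nu < 0 -> eigenvalue (H - L^T) nu -> nu = - mu) ->
  dotv v v = 1 ->
  dotv v ((invmx H *m v^T)^T)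
    = - (dotv v (e ord0)) ^+ 2 / lam ord0
      + \sum_(k : 'I_n) (dotv v (e (lift ord0 k))) ^+ 2 / lam (lift ord0 k)
  /\ - (dotv v (e ord0)) ^+ 2 / lam ord0
      + \sum_(k : 'I_n) (dotv v (e (lift ord0 k))) ^+ 2 / lam (lift ord0 k)
     = - 1 / mu
  /\ - 1 / mu < 0.
Proof.
move=> U_C3 U_morse l_C1 grad_orth_l crit _ e_orthonormal He0 Hek H L
  mu_gt0 eig_v _ v_unit.
have H_unit : H \in unitmx := U_morse _ crit.
pose c k := if k == ord0 then - lam ord0 else lam k.
have He k : H *m (e k)^T = c k *: (e k)^T.
  by rewrite /c; case: eqVneq => [->|/Hek].
have spectral : dotv v ((invmx H *m v^T)^T)
    = - (dotv v (e ord0)) ^+ 2 / lam ord0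
      + \sum_(k : 'I_n) (dotv v (e (lift ord0 k))) ^+ 2 / lam (lift ord0 k).
  rewrite (dotv_invmx_eigenbasis e_orthonormal _ H_unit He) big_ord_recl.
  rewrite /c eqxx invrN mulNr mulrC -mulNr; congr (_ + _).
  apply: eq_bigr => k _; rewrite eq_sym (negbTE (neq_lift ord0 k)); exact: mulrC.
have skewHL := hessian_mul_jacobian_skew U_C3 l_C1 grad_orth_l crit H_unit.
have value : - mu * dotv v ((invmx H *m v^T)^T) = 1.
  rewrite -v_unit !dotvE trmxK mulmxA.
  by have /matrixP/(_ 0 0) := eigen_quad_form_invmx H_unit skewHL eig_v; rewrite mxE.
rewrite -spectral; split; [by [] | split; last first].
  by rewrite mulN1r oppr_lt0 invr_gt0.
have mu_neq0 : mu != 0 by rewrite gt_eqF.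
by apply: (mulfI (x := - mu)); rewrite ?oppr_eq0 // value; field.
Qed.
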